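(* There is a constant $C_0>0$ depending only on $\widetilde\mu$ such that the following holds. Let $\varepsilon\in(0,1)$ and let $\omega\in\Omega$ be such that there is $\widetilde n_0$ with $$\Big|L(E)-\frac1{n^2}\sum_{s=0}^{n^2-1}F_n(T^{\zeta_0+sn}\omega,E)\Big|<\varepsilon$$ for all $n,\zeta_0\in\mathbb Z$ with $n\ge\max(\widetilde n_0,(\log(|\zeta_0|+1))^{2/3})$ and all $E\in\hat\Sigma$. Then there exists $\widetilde n_1=\widetilde n_1(\omega,\varepsilon)$ such that: (1) for all $E\in\hat\Sigma$ and all $n,\zeta_0\in\mathbb Z$ with $n\ge\max(\widetilde n_1,\log^2(|\zeta_0|+1))$, $$\frac1n\log\|M_n^E(T^{\zeta_0}\omega)\|\le L(E)+2\varepsilon;$$ (2) for all $n,\zeta_0\in\mathbb Z$ with $n\ge\varepsilon^{-1}\max(\widetilde n_1,2\log^2(|\zeta_0|+1))$, all $E\in\hat\Sigma\setminus\sigma(H_{T^{\zeta_0}\omega,n})$ and all $j,k\in[0,n)$, $$|G^E_{T^{\zeta_0}\omega,n}(j,k)|\le\frac{\exp\big[(n-|j-k|)L(E)+C_0\varepsilon n\big]}{|\det[H_{T^{\zeta_0}\omega,n}-E]|}.$$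
   Context: Let $\widetilde\mu$ be a Borel probability measure on $\mathbb R$ with compact support $\mathcal A$ containing at least two points; $\Omega=\mathcal A^{\mathbb Z}$, $\mu=\widetilde\mu^{\mathbb Z}$, $(T\omega)_n=\omega_{n+1}$; $[H_\omega\psi](n)=\psi(n+1)+\psi(n-1)+\omega_n\psi(n)$ on $\ell^2(\mathbb Z)$. For $E\in\mathbb R$, $M^E(\alpha)=\begin{pmatrix}E-\alpha&-1\\1&0\end{pmatrix}$, $M_n^E(\omega)=M^E(\omega_{n-1})\cdots M^E(\omega_0)$ for $n\ge1$, $F_n(\omega,E)=\frac1n\log\|M_n^E(\omega)\|$, $L(E)=\lim_{n\to\infty}\frac1n\int\log\|M_n^E\|\,d\mu$. $\hat\Sigma=[-\kappa,\kappa]$ with $\kappa=2+\max_{\alpha\in\mathcal A}|\alpha|$. For $N\in\mathbb Z_+$, $H_{\omega,N}=P_{[0,N)}H_\omega P_{[0,N)}^*$ is the restriction of $H_\omega$ to $\ell^2([0,N)\cap\mathbb Z)$ ($P_\Lambda$ the coordinate projection), and $G^E_{\omega,N}(j,k)=\langle\delta_j,(H_{\omega,N}-E)^{-1}\delta_k\rangle$. *)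

From Stdlib Require Import Reals Lra List ClassicalEpsilon.
Open Scope R_scope.

(* A Borel probability measure on R with compact support is represented (Riesz)
   by its integration functional I on continuous functions: linear, positive,
   normalized, and depending only on the values on some compact [-B,B]. *)
Definition prob_functional (I : (R -> R) -> R) : Prop :=
  (forall f g, continuity f -> continuity g ->
     I (fun x => f x + g x) = I f + I g) /\
  (forall (c : R) f, continuity f -> I (fun x => c * f x) = c * I f) /\
  (forall f, continuity f -> (forall x, 0 <= f x) -> 0 <= I f) /\
  I (fun _ => 1) = 1 /\
  (exists B : R, forall f g, continuity f -> continuity g ->
     (forall x, -B <= x <= B -> f x = g x) -> I f = I g).

Definition in_support (I : (R -> R) -> R) (x : R) : Prop :=
  forall f, continuity f -> (forall y, 0 <= f y) -> 0 < f x -> 0 < I f.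

(* iterated integral over the product measure on n coordinates;
   the list l = [a_0; ...; a_{n-1}] holds the coordinates *)
Fixpoint iter_int (I : (R -> R) -> R) (n : nat) (g : list R -> R) : R :=
  match n with
  | O => g nil
  | S k => I (fun a => iter_int I k (fun l => g (a :: l)))
  end.

Record mat2 := Mat2 { m11 : R; m12 : R; m21 : R; m22 : R }.

Definition mmul (A B : mat2) : mat2 :=
  Mat2 (m11 A * m11 B + m12 A * m21 B) (m11 A * m12 B + m12 A * m22 B)
       (m21 A * m11 B + m22 A * m21 B) (m21 A * m12 B + m22 A * m22 B).

Definition mid : mat2 := Mat2 1 0 0 1.

Definition transfer (E a : R) : mat2 := Mat2 (E - a) (-1) 1 0.

Fixpoint Mn (E : R) (w : Z -> R) (n : nat) : mat2 :=
  match n with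
  | O => mid
  | S k => mmul (transfer E (w (Z.of_nat k))) (Mn E w k)
  end.

Definition vnorm (x y : R) : R := sqrt (x * x + y * y).

Definition opnorm_set (A : mat2) (r : R) : Prop :=
  exists x y, vnorm x y = 1 /\
    r = vnorm (m11 A * x + m12 A * y) (m21 A * x + m22 A * y).

Definition opnorm (A : mat2) : R :=
  epsilon (inhabits 0) (fun r => is_lub (opnorm_set A) r).

Definition Fn (n : nat) (w : Z -> R) (E : R) : R :=
  / INR n * ln (opnorm (Mn E w n)).

Definition shift (z : Z) (w : Z -> R) : Z -> R := fun m => w (m + z)%Z.

Definition lyap_seq (I : (R -> R) -> R) (E : R) (n : nat) : R :=
  / INR n * iter_int I n
     (fun l => ln (opnorm (Mn E (fun z => nth (Z.to_nat z) l 0) n))).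

Fixpoint rsum (n : nat) (f : nat -> R) : R :=
  match n with
  | O => 0
  | S k => rsum k f + f k
  end.

(* matrix of H_{w,N} = P_[0,N) H_w P_[0,N)^* in the basis delta_0..delta_{N-1} *)
Definition Hmat (w : Z -> R) (i j : nat) : R :=
  if Nat.eqb i j then w (Z.of_nat i)
  else if orb (Nat.eqb i (S j)) (Nat.eqb j (S i)) then 1 else 0.

Definition minor (j : nat) (A : nat -> nat -> R) : nat -> nat -> R :=
  fun r c => A (S r) (if Nat.ltb c j then c else S c).

Fixpoint det (n : nat) (A : nat -> nat -> R) : R :=
  match n with
  | O => 1
  | S k => rsum (S k) (fun j => (-1) ^ j * A O j * det k (minor j A))
  end.

Definition shiftE (A : nat -> nat -> R) (E : R) : nat -> nat -> R :=
  fun i j => A i j - (if Nat.eqb i j then E else 0).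

Definition in_spec (n : nat) (A : nat -> nat -> R) (E : R) : Prop :=
  exists psi : nat -> R, (exists i, (i < n)%nat /\ psi i <> 0) /\
    forall i, (i < n)%nat -> rsum n (fun m => A i m * psi m) = E * psi i.

(* g restricted to [0,n) solves (A - E) g = delta_k, i.e. g j = ((A-E)^{-1})(j,k) *)
Definition green_col (n : nat) (A : nat -> nat -> R) (E : R) (k : nat)
    (g : nat -> R) : Prop :=
  forall i, (i < n)%nat ->
    rsum n (fun m => shiftE A E i m * g m) = (if Nat.eqb i k then 1 else 0).

(* Part (1).  Every transfer matrix and its inverse has norm at most K = 2 kappa.
   Round n up to a cube m^3 = n + d with d = O(m^2) = o(n) and cut M_{m^3} into
   m^2 blocks of length m: submultiplicativity and the averaged hypothesis give
   ln ||M_{m^3}|| < m^3 (L + eps), and M_n = M_d(T^n w)^{-1} M_{m^3} costs only d ln K more.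

   Part (2).  By Cramer's rule, for j <= k,
     |G(j,k)| |det (H_n - E)| = |P_j(w)| |P_{n-k-1}(T^{k+1} w)|
   where P are the Dirichlet determinants, the (1,1) entries of the transfer matrices.
   Each factor is at most exp (length * L + O(eps n)): by part (1) if the block is
   long and starts near the origin, and by the trivial bound K^length otherwise, the
   block being then short thanks to the log^2 condition on n. *)

From Stdlib Require Import Reals List.
From Stdlib Require Import Lra Lia ClassicalEpsilon FunctionalExtensionality.
Open Scope R_scope.

Lemma vnorm_ge0 x y : 0 <= vnorm x y.
Proof. apply sqrt_pos. Qed.

Lemma vnorm_sq x y : vnorm x y * vnorm x y = x * x + y * y.
Proof. apply sqrt_sqrt; nra. Qed.

Lemma vnorm_eq0 x y : vnorm x y = 0 -> x = 0 /\ y = 0.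
Proof. intros h; pose proof (vnorm_sq x y) as e; rewrite h in e; split; nra. Qed.

Lemma Rabs_le_vnorm x y : Rabs x <= vnorm x y.
Proof.
  pose proof (vnorm_sq x y); pose proof (vnorm_ge0 x y).
  assert (Rabs x * Rabs x = x * x) by (rewrite <- Rabs_mult; apply Rabs_right; nra).
  pose proof (Rabs_pos x); nra.
Qed.

Lemma vnorm_scale c x y : vnorm (c * x) (c * y) = Rabs c * vnorm x y.
Proof.
  unfold vnorm. replace (c * x * (c * x) + c * y * (c * y)) with ((c * c) * (x * x + y * y)) by ring.
  rewrite sqrt_mult by nra. f_equal. exact (sqrt_Rsqr_abs c).
Qed.

Lemma vnorm_e1 : vnorm 1 0 = 1.
Proof. unfold vnorm. replace (1 * 1 + 0 * 0) with 1 by ring. apply sqrt_1. Qed.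

Lemma vnorm_e2 : vnorm 0 1 = 1.
Proof. unfold vnorm. replace (0 * 0 + 1 * 1) with 1 by ring. apply sqrt_1. Qed.

Definition apply_norm (A : mat2) (x y : R) : R :=
  vnorm (m11 A * x + m12 A * y) (m21 A * x + m22 A * y).

Definition entry_sum (A : mat2) : R :=
  Rabs (m11 A) + Rabs (m12 A) + Rabs (m21 A) + Rabs (m22 A).

(* Cauchy-Schwarz row by row, then the Frobenius norm is at most the l^1 norm. *)
Lemma apply_norm_le_entry_sum A x y : apply_norm A x y <= entry_sum A * vnorm x y.
Proof.
  unfold apply_norm, entry_sum, vnorm.
  set (a := m11 A); set (b := m12 A); set (c := m21 A); set (d := m22 A).
  assert (hF : sqrt (a * a + b * b + c * c + d * d) <= Rabs a + Rabs b + Rabs c + Rabs d).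
  { apply Rsqr_incr_0_var; [|pose proof (Rabs_pos a); pose proof (Rabs_pos b);
      pose proof (Rabs_pos c); pose proof (Rabs_pos d); lra].
    unfold Rsqr; rewrite sqrt_sqrt by nra.
    pose proof (Rabs_pos a); pose proof (Rabs_pos b); pose proof (Rabs_pos c);
      pose proof (Rabs_pos d).
    pose proof (Rsqr_abs a); pose proof (Rsqr_abs b); pose proof (Rsqr_abs c);
      pose proof (Rsqr_abs d).
    unfold Rsqr in *.
    nra. }
  eapply Rle_trans; [|apply Rmult_le_compat_r; [apply sqrt_pos|exact hF]].
  rewrite <- sqrt_mult by nra. apply sqrt_le_1_alt.
  pose proof (Rle_0_sqr (a * y - b * x)); pose proof (Rle_0_sqr (c * y - d * x)).
  unfold Rsqr in *. nra.
Qed.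

Lemma opnorm_is_lub A : is_lub (opnorm_set A) (opnorm A).
Proof.
  unfold opnorm. apply epsilon_spec.
  destruct (completeness (opnorm_set A)) as [m Hm].
  - exists (entry_sum A). intros r [x [y [h1 ->]]].
    pose proof (apply_norm_le_entry_sum A x y) as h. unfold apply_norm in h.
    rewrite h1 in h. lra.
  - exists (apply_norm A 1 0), 1, 0. split; [exact vnorm_e1|reflexivity].
  - exists m; exact Hm.
Qed.

Lemma apply_norm_le_opnorm A x y : vnorm x y = 1 -> apply_norm A x y <= opnorm A.
Proof. intros h. apply (proj1 (opnorm_is_lub A)). exists x, y; auto. Qed.

Lemma opnorm_le A c : (forall x y, vnorm x y = 1 -> apply_norm A x y <= c) -> opnorm A <= c.
Proof. intros h. apply (proj2 (opnorm_is_lub A)). intros r [x [y [h1 ->]]]. exact (h x y h1). Qed.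

Lemma opnorm_le_entry_sum A : opnorm A <= entry_sum A.
Proof.
  apply opnorm_le. intros x y h.
  pose proof (apply_norm_le_entry_sum A x y). rewrite h in *. lra.
Qed.

Lemma column1_le_opnorm A : vnorm (m11 A) (m21 A) <= opnorm A.
Proof.
  pose proof (apply_norm_le_opnorm A 1 0 vnorm_e1) as h. unfold apply_norm in h.
  now rewrite !Rmult_1_r, !Rmult_0_r, !Rplus_0_r in h.
Qed.

Lemma column2_le_opnorm A : vnorm (m12 A) (m22 A) <= opnorm A.
Proof.
  pose proof (apply_norm_le_opnorm A 0 1 vnorm_e2) as h. unfold apply_norm in h.
  now rewrite !Rmult_1_r, !Rmult_0_r, !Rplus_0_l in h.
Qed.

Lemma opnorm_ge0 A : 0 <= opnorm A.
Proof. pose proof (column1_le_opnorm A); pose proof (vnorm_ge0 (m11 A) (m21 A)); lra. Qed.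

Lemma Rabs_m11_le_opnorm A : Rabs (m11 A) <= opnorm A.
Proof. pose proof (column1_le_opnorm A); pose proof (Rabs_le_vnorm (m11 A) (m21 A)); lra. Qed.

Lemma apply_norm_le A x y : apply_norm A x y <= opnorm A * vnorm x y.
Proof.
  pose proof (opnorm_ge0 A). pose proof (vnorm_ge0 x y).
  destruct (Req_dec (vnorm x y) 0) as [h|h].
  - destruct (vnorm_eq0 x y h) as [-> ->]. unfold apply_norm.
    rewrite h, !Rmult_0_r, !Rplus_0_r.
    unfold vnorm. rewrite Rmult_0_r, Rplus_0_r, sqrt_0. lra.
  - set (r := vnorm x y) in *.
    assert (hr : 0 < / r) by (apply Rinv_0_lt_compat; lra).
    assert (hu : vnorm (/ r * x) (/ r * y) = 1)
      by (rewrite vnorm_scale, Rabs_right by lra; fold r; field; lra).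
    pose proof (apply_norm_le_opnorm A _ _ hu) as h1. unfold apply_norm in *.
    replace (m11 A * (/ r * x) + m12 A * (/ r * y)) with (/ r * (m11 A * x + m12 A * y))
      in h1 by ring.
    replace (m21 A * (/ r * x) + m22 A * (/ r * y)) with (/ r * (m21 A * x + m22 A * y))
      in h1 by ring.
    rewrite vnorm_scale, Rabs_right in h1 by lra.
    apply Rmult_le_compat_l with (r := r) in h1; [|lra].
    rewrite <- Rmult_assoc, Rinv_r, Rmult_1_l in h1 by lra. lra.
Qed.

Lemma opnorm_mmul A B : opnorm (mmul A B) <= opnorm A * opnorm B.
Proof.
  apply opnorm_le. intros x y h.
  set (u := m11 B * x + m12 B * y). set (v := m21 B * x + m22 B * y).
  replace (apply_norm (mmul A B) x y) with (apply_norm A u v)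
    by (unfold apply_norm, u, v; simpl; f_equal; ring).
  pose proof (apply_norm_le A u v) as hA. pose proof (apply_norm_le_opnorm B x y h) as hB.
  pose proof (opnorm_ge0 A). unfold apply_norm in hB. fold u v in hB. nra.
Qed.

Lemma opnorm_mid : opnorm mid <= 1.
Proof.
  apply opnorm_le. intros x y h. unfold apply_norm; simpl.
  replace (1 * x + 0 * y) with x by ring. replace (0 * x + 1 * y) with y by ring. lra.
Qed.

(* 1 = det A <= |A e1| |A e2| (Hadamard) <= ||A||^2. *)
Lemma opnorm_ge1_of_det1 A : m11 A * m22 A - m12 A * m21 A = 1 -> 1 <= opnorm A.
Proof.
  intros hd.
  pose proof (column1_le_opnorm A) as h1. pose proof (column2_le_opnorm A) as h2.
  pose proof (vnorm_sq (m11 A) (m21 A)) as s1. pose proof (vnorm_sq (m12 A) (m22 A)) as s2.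
  pose proof (vnorm_ge0 (m11 A) (m21 A)) as hc1. pose proof (vnorm_ge0 (m12 A) (m22 A)) as hc2.
  set (c1 := vnorm (m11 A) (m21 A)) in *. set (c2 := vnorm (m12 A) (m22 A)) in *.
  assert (hc : 1 <= (c1 * c2) * (c1 * c2)).
  { replace ((c1 * c2) * (c1 * c2)) with ((c1 * c1) * (c2 * c2)) by ring.
    rewrite s1, s2.
    pose proof (Rle_0_sqr (m11 A * m12 A + m21 A * m22 A)). unfold Rsqr in *.
    replace 1 with ((m11 A * m22 A - m12 A * m21 A) * (m11 A * m22 A - m12 A * m21 A))
      by (rewrite hd; ring).
    nra. }
  pose proof (opnorm_ge0 A). pose proof (Rmult_le_pos c1 c2 hc1 hc2).
  assert (1 <= c1 * c2) by nra.
  assert (c1 * c2 <= opnorm A * opnorm A) by (apply Rmult_le_compat; auto). nra.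
Qed.

Lemma mmul_assoc A B C : mmul A (mmul B C) = mmul (mmul A B) C.
Proof. destruct A, B, C; unfold mmul; simpl; f_equal; ring. Qed.

Lemma mmul_1l A : mmul mid A = A.
Proof. destruct A; unfold mmul, mid; simpl; f_equal; ring. Qed.

Lemma mmul_1r A : mmul A mid = A.
Proof. destruct A; unfold mmul, mid; simpl; f_equal; ring. Qed.

Lemma shift_shift a b w : shift a (shift b w) = shift (b + a)%Z w.
Proof. extensionality m. unfold shift. f_equal. lia. Qed.

Lemma shift0 w : shift 0%Z w = w.
Proof. extensionality m. unfold shift. f_equal. lia. Qed.

Lemma shift_at0 z w : shift z w 0%Z = w z.
Proof. reflexivity. Qed.

Lemma Mn_add E w a b :
  Mn E w (a + b) = mmul (Mn E (shift (Z.of_nat a) w) b) (Mn E w a).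
Proof.
  induction b as [|b IH].
  - rewrite Nat.add_0_r. simpl. now rewrite mmul_1l.
  - rewrite Nat.add_succ_r. simpl. rewrite IH, mmul_assoc. unfold shift.
    now replace (Z.of_nat (a + b)) with (Z.of_nat b + Z.of_nat a)%Z by lia.
Qed.

Lemma Mn_det E w n :
  m11 (Mn E w n) * m22 (Mn E w n) - m12 (Mn E w n) * m21 (Mn E w n) = 1.
Proof.
  induction n as [|n IH]; simpl; [ring|].
  set (M := Mn E w n) in *. transitivity (m11 M * m22 M - m12 M * m21 M); [ring|exact IH].
Qed.

Lemma opnorm_Mn_ge1 E w n : 1 <= opnorm (Mn E w n).
Proof. apply opnorm_ge1_of_det1, Mn_det. Qed.

Lemma opnorm_Mn_pos E w n : 0 < opnorm (Mn E w n).
Proof. pose proof (opnorm_Mn_ge1 E w n). lra. Qed.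

Definition transfer_inv (E a : R) : mat2 := Mat2 0 1 (-1) (E - a).

Lemma transfer_inv_transfer E a : mmul (transfer_inv E a) (transfer E a) = mid.
Proof. unfold mmul, transfer_inv, transfer, mid; simpl; f_equal; ring. Qed.

Fixpoint Mn_inv (E : R) (w : Z -> R) (n : nat) : mat2 :=
  match n with
  | O => mid
  | S k => mmul (Mn_inv E w k) (transfer_inv E (w (Z.of_nat k)))
  end.

Lemma Mn_inv_Mn E w n : mmul (Mn_inv E w n) (Mn E w n) = mid.
Proof.
  induction n as [|n IH]; simpl; [apply mmul_1l|].
  rewrite mmul_assoc, <- (mmul_assoc (Mn_inv E w n)), transfer_inv_transfer, mmul_1r.
  exact IH.
Qed.

Definition potential_bound (K E : R) (w : Z -> R) : Prop :=
  forall m, Rabs (E - w m) + 2 <= K.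

Lemma potential_bound_shift K E w z : potential_bound K E w -> potential_bound K E (shift z w).
Proof. intros h m. apply h. Qed.

Lemma Rabs_m1 : Rabs (-1) = 1.
Proof. rewrite Rabs_left; lra. Qed.

Section BoundedPotential.
Variables (K E : R) (w : Z -> R).
Hypothesis Hw : potential_bound K E w.

Lemma opnorm_transfer_le m : opnorm (transfer E (w m)) <= K.
Proof.
  eapply Rle_trans; [apply opnorm_le_entry_sum|]. unfold entry_sum; simpl.
  rewrite Rabs_R0, Rabs_m1, Rabs_R1. pose proof (Hw m). lra.
Qed.

Lemma opnorm_transfer_inv_le m : opnorm (transfer_inv E (w m)) <= K.
Proof.
  eapply Rle_trans; [apply opnorm_le_entry_sum|]. unfold entry_sum; simpl.
  rewrite Rabs_R0, Rabs_m1, Rabs_R1. pose proof (Hw m). lra.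
Qed.

Lemma K_ge2 : 2 <= K.
Proof. pose proof (Hw 0%Z). pose proof (Rabs_pos (E - w 0%Z)). lra. Qed.

Lemma opnorm_Mn_le n : opnorm (Mn E w n) <= K ^ n.
Proof.
  pose proof K_ge2.
  induction n as [|n IH]; simpl; [apply opnorm_mid|].
  eapply Rle_trans; [apply opnorm_mmul|].
  apply Rmult_le_compat; auto using opnorm_ge0, opnorm_transfer_le.
Qed.

Lemma opnorm_Mn_inv_le n : opnorm (Mn_inv E w n) <= K ^ n.
Proof.
  pose proof K_ge2.
  induction n as [|n IH]; simpl; [apply opnorm_mid|].
  eapply Rle_trans; [apply opnorm_mmul|]. rewrite Rmult_comm.
  apply Rmult_le_compat; auto using opnorm_ge0, opnorm_transfer_inv_le.
Qed.

End BoundedPotential.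

(* Dirichlet determinant: Pn E w n = (-1)^n det (H_{w,n} - E) by det_shiftE_Hmat. *)
Definition Pn (E : R) (w : Z -> R) (n : nat) : R := m11 (Mn E w n).

Lemma Pn_0 E w : Pn E w 0 = 1.
Proof. reflexivity. Qed.

Lemma Pn_1 E w : Pn E w 1 = E - w 0%Z.
Proof. unfold Pn; simpl. ring. Qed.

Lemma Pn_SS E w m :
  Pn E w (S (S m)) = (E - w (Z.of_nat (S m))) * Pn E w (S m) - Pn E w m.
Proof. unfold Pn. simpl Mn at 1. simpl Mn at 2. simpl. ring. Qed.

Lemma Mn_succ_r E w n : Mn E w (S n) = mmul (Mn E (shift 1 w) n) (transfer E (w 0%Z)).
Proof. rewrite <- Nat.add_1_l, Mn_add. simpl. now rewrite mmul_1r. Qed.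

Lemma Pn_SS_shift E w m :
  Pn E w (S (S m)) = (E - w 0%Z) * Pn E (shift 1 w) (S m) - Pn E (shift 2 w) m.
Proof.
  unfold Pn. rewrite Mn_succ_r, (Mn_succ_r E (shift 1 w) m), shift_shift. simpl. ring.
Qed.

Definition Pn_prev (E : R) (w : Z -> R) (n : nat) : R :=
  match n with O => 0 | S m => Pn E w m end.

Lemma Pn_S E w n : Pn E w (S n) = (E - w (Z.of_nat n)) * Pn E w n - Pn_prev E w n.
Proof. destruct n; cbn [Pn_prev]; [rewrite Pn_1, Pn_0; simpl|rewrite Pn_SS]; ring. Qed.

Definition Ptail (E : R) (w : Z -> R) (n j : nat) : R := Pn E (shift (Z.of_nat j) w) (n - j).

Lemma Ptail_n E w n : Ptail E w n n = 1.
Proof. unfold Ptail. now rewrite Nat.sub_diag. Qed.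

Lemma Ptail_rec E w n i : (i < n)%nat ->
  Ptail E w n i = (E - w (Z.of_nat i)) * Ptail E w n (S i) -
    (if Nat.ltb (S i) n then Ptail E w n (S (S i)) else 0).
Proof.
  intros hi. unfold Ptail. destruct (Nat.ltb_spec (S i) n).
  - replace (n - i)%nat with (S (S (n - S (S i)))) by lia.
    replace (n - S i)%nat with (S (n - S (S i))) by lia.
    rewrite Pn_SS_shift, !shift_shift.
    replace (Z.of_nat i + 1)%Z with (Z.of_nat (S i)) by lia.
    replace (Z.of_nat i + 2)%Z with (Z.of_nat (S (S i))) by lia.
    rewrite shift_at0. ring.
  - replace (n - i)%nat with 1%nat by lia. replace (n - S i)%nat with 0%nat by lia.
    rewrite Pn_1, Pn_0, shift_at0. ring.
Qed.

Lemma Pn_wronskian E b : forall k w,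
  Pn E w k * Pn E (shift (Z.of_nat (S (S k))) w) b
  - Pn E w (S k) * Pn E (shift (Z.of_nat (S k)) w) (S b) = - Pn E w (k + b + 2).
Proof.
  induction b as [|b IH]; intros k w.
  - rewrite Pn_0, Pn_1. replace (k + 0 + 2)%nat with (S (S k)) by lia. rewrite Pn_SS.
    rewrite shift_at0. ring.
  - rewrite Pn_SS_shift, !shift_shift.
    replace (Z.of_nat (S k) + 1)%Z with (Z.of_nat (S (S k))) by lia.
    replace (Z.of_nat (S k) + 2)%Z with (Z.of_nat (S (S (S k)))) by lia.
    replace (k + S b + 2)%nat with (S k + b + 2)%nat by lia.
    rewrite <- IH, (Pn_S E w (S k)), shift_at0. cbn [Pn_prev]. ring.
Qed.

Lemma rsum_S_l n f : rsum (S n) f = f 0%nat + rsum n (fun j => f (S j)).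
Proof.
  induction n as [|n IH]; [simpl; ring|].
  change (rsum (S (S n)) f) with (rsum (S n) f + f (S n)). rewrite IH. simpl. ring.
Qed.

Lemma rsum_ext n f g : (forall j, (j < n)%nat -> f j = g j) -> rsum n f = rsum n g.
Proof.
  induction n as [|n IH]; intros h; simpl; auto.
  rewrite IH, h; [reflexivity|lia|intros; apply h; lia].
Qed.

Lemma rsum_0 n f : (forall j, (j < n)%nat -> f j = 0) -> rsum n f = 0.
Proof.
  intros h. rewrite (rsum_ext n f (fun _ => 0)) by exact h. clear h.
  induction n as [|n IH]; simpl; [reflexivity|]. rewrite IH; ring.
Qed.

Lemma rsum_add n f g : rsum n (fun j => f j + g j) = rsum n f + rsum n g.
Proof. induction n as [|n IH]; simpl; [ring|]. rewrite IH; ring. Qed.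

Lemma rsum_scal n c f : rsum n (fun j => c * f j) = c * rsum n f.
Proof. induction n as [|n IH]; simpl; [ring|]. rewrite IH; ring. Qed.

Lemma rsum_delta n a c :
  rsum n (fun m => if Nat.eqb m a then c else 0) = if Nat.ltb a n then c else 0.
Proof.
  induction n as [|n IH]; simpl; [destruct a; reflexivity|].
  rewrite IH. destruct (Nat.eqb_spec n a), (Nat.ltb_spec a n), (Nat.ltb_spec a (S n));
    subst; try lia; ring.
Qed.

Lemma rsum_le n f c : (forall j, (j < n)%nat -> f j <= c) -> rsum n f <= INR n * c.
Proof.
  induction n as [|n IH]; intros h; simpl rsum; [simpl; lra|].
  rewrite S_INR. assert (rsum n f <= INR n * c) by (apply IH; intros; apply h; lia).
  assert (f n <= c) by (apply h; lia). lra.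
Qed.

Lemma rsum_ge n f c : (forall j, (j < n)%nat -> c <= f j) -> INR n * c <= rsum n f.
Proof.
  induction n as [|n IH]; intros h; simpl rsum; [simpl; lra|].
  rewrite S_INR. assert (INR n * c <= rsum n f) by (apply IH; intros; apply h; lia).
  assert (c <= f n) by (apply h; lia). lra.
Qed.

Lemma det_col0_eq0 m M : (forall r, M r 0%nat = 0) -> det (S m) M = 0.
Proof.
  revert M. induction m as [|m IH]; intros M h.
  - simpl. rewrite h. ring.
  - change (det (S (S m)) M) with
      (rsum (S (S m)) (fun j => (-1) ^ j * M O j * det (S m) (minor j M))).
    apply rsum_0. intros [|j] hj.
    + rewrite h. ring.
    + rewrite IH; [ring|]. intros r. apply h.
Qed.

Lemma det_tridiag n A :
  (forall j, A 0%nat (S (S j)) = 0) -> (forall r, A (S (S r)) 0%nat = 0) ->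
  det (S (S n)) A = A 0%nat 0%nat * det (S n) (minor 0 A)
     - A 0%nat 1%nat * A 1%nat 0%nat * det n (minor 0 (minor 0 A)).
Proof.
  intros hrow hcol.
  change (det (S (S n)) A) with
    (rsum (S (S n)) (fun j => (-1) ^ j * A O j * det (S n) (minor j A))).
  rewrite rsum_S_l, rsum_S_l.
  rewrite (rsum_0 n) by (intros j _; rewrite hrow; ring).
  assert (hminor : det (S n) (minor 1 A) = A 1%nat 0%nat * det n (minor 0 (minor 0 A))).
  { change (det (S n) (minor 1 A)) with
      (rsum (S n) (fun j => (-1) ^ j * minor 1 A O j * det n (minor j (minor 1 A)))).
    rewrite rsum_S_l, (rsum_0 n).
    - change (minor 0 (minor 1 A)) with (minor 0 (minor 0 A)).
      change (minor 1 A 0%nat 0%nat) with (A 1%nat 0%nat). simpl. ring.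
    - intros j hj. destruct n; [lia|]. rewrite det_col0_eq0; [ring|].
      intros r. apply hcol. }
  rewrite hminor. simpl. ring.
Qed.

Lemma minor0_shiftE_Hmat E w : minor 0 (shiftE (Hmat w) E) = shiftE (Hmat (shift 1 w)) E.
Proof.
  extensionality r; extensionality c. unfold minor, shiftE, Hmat. simpl.
  destruct (Nat.eqb r c); auto. unfold shift. do 3 f_equal. lia.
Qed.

Lemma det_shiftE_Hmat_SS E w n : det (S (S n)) (shiftE (Hmat w) E) =
  (w 0%Z - E) * det (S n) (shiftE (Hmat (shift 1 w)) E)
  - det n (shiftE (Hmat (shift 2 w)) E).
Proof.
  rewrite det_tridiag.
  - rewrite !minor0_shiftE_Hmat, shift_shift. unfold shiftE, Hmat. simpl. ring.
  - intros j. unfold shiftE, Hmat. destruct j; simpl; ring.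
  - intros r. unfold shiftE, Hmat. destruct r; simpl; ring.
Qed.

Lemma det_shiftE_Hmat E n w : det n (shiftE (Hmat w) E) = (-1) ^ n * Pn E w n.
Proof.
  revert w. induction n as [n IH] using (well_founded_induction Wf_nat.lt_wf). intros w.
  destruct n as [|[|n]].
  - simpl. rewrite Pn_0. ring.
  - rewrite Pn_1. unfold shiftE, Hmat. simpl. ring.
  - rewrite det_shiftE_Hmat_SS, !IH, Pn_SS_shift by lia. simpl. ring.
Qed.

Lemma shiftE_Hmat_row E w n g i : (i < n)%nat ->
  rsum n (fun m => shiftE (Hmat w) E i m * g m) =
  (w (Z.of_nat i) - E) * g i + (match i with O => 0 | S i' => g i' end) +
  (if Nat.ltb (S i) n then g (S i) else 0).
Proof.
  intros hi.
  rewrite (rsum_ext n _ (fun m =>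
    (if Nat.eqb m i then (w (Z.of_nat i) - E) * g i else 0) +
    (if Nat.eqb m (S i) then g (S i) else 0) +
    (match i with O => 0 | S i' => if Nat.eqb m i' then g i' else 0 end))).
  - rewrite !rsum_add, !rsum_delta. destruct (Nat.ltb_spec i n); [|lia].
    destruct i as [|i].
    + rewrite rsum_0 by auto. ring.
    + rewrite rsum_delta. destruct (Nat.ltb_spec i n); [ring|lia].
  - intros m _. unfold shiftE, Hmat. destruct i;
      repeat match goal with |- context [Nat.eqb ?a ?b] => destruct (Nat.eqb_spec a b) end;
      subst; simpl; try lia; ring.
Qed.

Lemma in_spec_of_Pn_eq0 E w n : (1 <= n)%nat -> Pn E w n = 0 -> in_spec n (Hmat w) E.
Proof.
  intros hn h0. exists (fun i => Ptail E w n (S i)). split.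
  - exists (n - 1)%nat. split; [lia|]. replace (S (n - 1)) with n by lia.
    rewrite Ptail_n. lra.
  - intros i hi.
    assert (hrow : rsum n (fun m => Hmat w i m * Ptail E w n (S m))
      = rsum n (fun m => shiftE (Hmat w) E i m * Ptail E w n (S m)) + E * Ptail E w n (S i)).
    { rewrite (rsum_ext n _ (fun m => shiftE (Hmat w) E i m * Ptail E w n (S m)
          + (if Nat.eqb m i then E * Ptail E w n (S i) else 0))).
      - rewrite rsum_add, rsum_delta. destruct (Nat.ltb_spec i n); [reflexivity|lia].
      - intros m _. unfold shiftE.
        destruct (Nat.eqb_spec i m), (Nat.eqb_spec m i); subst; try lia; ring. }
    rewrite hrow, shiftE_Hmat_row by exact hi.
    pose proof (Ptail_rec E w n i hi) as hrec.
    destruct i as [|i].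
    + unfold Ptail at 1 in hrec. rewrite shift0, Nat.sub_0_r, h0 in hrec.
      destruct (Nat.ltb 1 n); simpl in *; lra.
    + destruct (Nat.ltb (S (S i)) n); lra.
Qed.

Section Green.
Variables (E : R) (w : Z -> R) (n k : nat) (g : nat -> R).
Hypothesis Hk : (k < n)%nat.
Hypothesis Hg : green_col n (Hmat w) E k g.

Let g_prev (i : nat) : R := match i with O => 0 | S i' => g i' end.
Let g_next (i : nat) : R := if Nat.ltb (S i) n then g (S i) else 0.

Let green_row i : (i < n)%nat ->
  (w (Z.of_nat i) - E) * g i + g_prev i + g_next i = if Nat.eqb i k then 1 else 0.
Proof. intros hi. unfold g_prev, g_next. rewrite <- shiftE_Hmat_row by exact hi. apply Hg, hi. Qed.

(* Left of k the column solves the eigenvalue equation started from the left edge. *)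
Lemma green_left j : (j <= k)%nat -> g j = g 0%nat * Pn E w j /\ g_prev j = g 0%nat * Pn_prev E w j.
Proof.
  induction j as [|j IH]; intros hj; [rewrite Pn_0; simpl; split; ring|].
  destruct IH as [h1 h2]; [lia|].
  pose proof (green_row j ltac:(lia)) as he. unfold g_next in he.
  destruct (Nat.eqb_spec j k), (Nat.ltb_spec (S j) n); try lia.
  split; [|exact h1].
  rewrite Pn_S. replace (g (S j)) with ((E - w (Z.of_nat j)) * g j - g_prev j) by lra.
  rewrite h1, h2. ring.
Qed.

Lemma green_right d i : (i + d = n - 1)%nat -> (k <= i)%nat ->
  g i = g (n - 1)%nat * Ptail E w n (S i) /\
  g_next i = g (n - 1)%nat * (if Nat.ltb (S i) n then Ptail E w n (S (S i)) else 0).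
Proof.
  revert i. induction d as [|d IH]; intros i hi hki.
  - replace i with (n - 1)%nat by lia. unfold g_next.
    replace (S (n - 1)) with n by lia. rewrite Ptail_n, Nat.ltb_irrefl. split; ring.
  - destruct (IH (S i)) as [h1 h2]; try lia.
    pose proof (green_row (S i) ltac:(lia)) as he.
    pose proof (Ptail_rec E w n (S i) ltac:(lia)) as hrec.
    destruct (Nat.eqb_spec (S i) k); [lia|].
    unfold g_next. destruct (Nat.ltb_spec (S i) n); [|lia].
    split; [|exact h1].
    replace (g i) with ((E - w (Z.of_nat (S i))) * g (S i) - g_next (S i))
      by (cbn [g_prev] in he; lra).
    rewrite hrec, h1, h2. ring.
Qed.

(* Matching the two one-sided solutions at k, through the Wronskian. *)
Lemma green_ends :
  g 0%nat * - Pn E w n = Ptail E w n (S k) /\ g (n - 1)%nat * - Pn E w n = Pn E w k.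
Proof.
  destruct (green_left k (le_n k)) as [l1 l2].
  destruct (green_right (n - 1 - k) k ltac:(lia) (le_n k)) as [r1 r2].
  pose proof (green_row k Hk) as he. rewrite Nat.eqb_refl in he.
  set (Pnext := if Nat.ltb (S k) n then Ptail E w n (S (S k)) else 0) in *.
  assert (hw : Pn E w k * Pnext - Pn E w (S k) * Ptail E w n (S k) = - Pn E w n).
  { unfold Pnext, Ptail. destruct (Nat.ltb_spec (S k) n).
    - pose proof (Pn_wronskian E (n - S (S k)) k w) as hw0.
      replace (k + (n - S (S k)) + 2)%nat with n in hw0 by lia.
      replace (S (n - S (S k))) with (n - S k)%nat in hw0 by lia. exact hw0.
    - replace n with (S k) by lia. rewrite Nat.sub_diag, Pn_0. ring. }
  assert (hkey : - g 0%nat * Pn E w (S k) + g (n - 1)%nat * Pnext = 1).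
  { rewrite l1, l2, r2 in he. rewrite Pn_S. lra. }
  rewrite <- hw. split.
  - transitivity (Pnext * (g 0%nat * Pn E w k - g (n - 1)%nat * Ptail E w n (S k))
      + Ptail E w n (S k) * (- g 0%nat * Pn E w (S k) + g (n - 1)%nat * Pnext)); [ring|].
    rewrite <- l1, <- r1, hkey. ring.
  - transitivity (Pn E w k * (- g 0%nat * Pn E w (S k) + g (n - 1)%nat * Pnext)
      + Pn E w (S k) * (g 0%nat * Pn E w k - g (n - 1)%nat * Ptail E w n (S k))); [ring|].
    rewrite <- l1, <- r1, hkey. ring.
Qed.

Lemma green_formula j : (j < n)%nat ->
  ((j <= k)%nat -> Rabs (g j) * Rabs (Pn E w n) = Rabs (Pn E w j) * Rabs (Ptail E w n (S k))) /\
  ((k <= j)%nat -> Rabs (g j) * Rabs (Pn E w n) = Rabs (Ptail E w n (S j)) * Rabs (Pn E w k)).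
Proof.
  intros hj. destruct green_ends as [e0 e1]. split; intros hjk.
  - rewrite (proj1 (green_left j hjk)), <- e0, !Rabs_mult, Rabs_Ropp. ring.
  - rewrite (proj1 (green_right (n - 1 - j) j ltac:(lia) hjk)), <- e1, !Rabs_mult, Rabs_Ropp.
    ring.
Qed.

End Green.

Lemma ln_le_ln x y : 0 < x -> x <= y -> ln x <= ln y.
Proof. intros hx [h| ->]; [left; apply ln_increasing|]; lra. Qed.

Lemma exp_le_exp x y : x <= y -> exp x <= exp y.
Proof. intros [h| ->]; [left; apply exp_increasing|]; lra. Qed.

Lemma ln_ge0 x : 1 <= x -> 0 <= ln x.
Proof. intros h. rewrite <- ln_1. apply ln_le_ln; lra. Qed.

Lemma ln_opnorm_Mn_ge0 E w n : 0 <= ln (opnorm (Mn E w n)).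
Proof. apply ln_ge0, opnorm_Mn_ge1. Qed.

Lemma ln_opnorm_Mn_mul_le E w m q :
  ln (opnorm (Mn E w (m * q))) <=
  rsum q (fun s => ln (opnorm (Mn E (shift (Z.of_nat (s * m)) w) m))).
Proof.
  induction q as [|q IH].
  - rewrite Nat.mul_0_r. simpl rsum.
    replace (opnorm (Mn E w 0)) with 1 by (apply Rle_antisym; [apply opnorm_Mn_ge1|apply opnorm_mid]).
    rewrite ln_1. lra.
  - replace (m * S q)%nat with (m * q + m)%nat by lia. rewrite Mn_add. simpl rsum.
    eapply Rle_trans; [apply ln_le_ln; [rewrite <- Mn_add; apply opnorm_Mn_pos|apply opnorm_mmul]|].
    rewrite ln_mult by apply opnorm_Mn_pos.
    replace (Z.of_nat (m * q)) with (Z.of_nat (q * m)) by (f_equal; lia). lra.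
Qed.

Section GrowthBounds.
Variables (K E : R) (w : Z -> R).
Hypothesis Hw : potential_bound K E w.

Lemma ln_opnorm_Mn_le n : ln (opnorm (Mn E w n)) <= INR n * ln K.
Proof.
  pose proof (K_ge2 K E w Hw).
  rewrite <- ln_pow by lra. apply ln_le_ln; [apply opnorm_Mn_pos|]. apply opnorm_Mn_le, Hw.
Qed.

Lemma Fn_bounds n : (1 <= n)%nat -> 0 <= Fn n w E <= ln K.
Proof.
  intros hn. unfold Fn. assert (0 < INR n) by (apply lt_0_INR; lia).
  pose proof (ln_opnorm_Mn_ge0 E w n). pose proof ln_opnorm_Mn_le n.
  split; [apply Rmult_le_pos; [left; apply Rinv_0_lt_compat|]; lra|].
  apply Rmult_le_reg_l with (INR n); [lra|]. rewrite <- Rmult_assoc, Rinv_r by lra. lra.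
Qed.

(* M_n = M_{N-n}(T^n w)^{-1} M_N, and the inverse transfer matrices are bounded by K too. *)
Lemma ln_opnorm_Mn_le_extend n N : (n <= N)%nat ->
  ln (opnorm (Mn E w n)) <= ln (opnorm (Mn E w N)) + INR (N - n) * ln K.
Proof.
  intros hnN. pose proof (K_ge2 K E w Hw).
  set (B := Mn_inv E (shift (Z.of_nat n) w) (N - n)).
  assert (e : Mn E w n = mmul B (Mn E w N)).
  { unfold B. replace N with (n + (N - n))%nat at 2 by lia.
    rewrite Mn_add, mmul_assoc, Mn_inv_Mn, mmul_1l. reflexivity. }
  assert (hB : opnorm B <= K ^ (N - n))
    by (apply opnorm_Mn_inv_le, potential_bound_shift, Hw).
  assert (hB0 : 0 < opnorm B).
  { pose proof (opnorm_mmul B (Mn E w N)) as h. rewrite <- e in h.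
    pose proof (opnorm_Mn_ge1 E w n). pose proof (opnorm_Mn_pos E w N).
    destruct (opnorm_ge0 B) as [|h0]; [assumption|]. rewrite <- h0 in h. lra. }
  rewrite e at 1.
  eapply Rle_trans; [apply ln_le_ln; [rewrite <- e; apply opnorm_Mn_pos|apply opnorm_mmul]|].
  rewrite ln_mult by (auto using opnorm_Mn_pos).
  rewrite <- ln_pow by lra.
  assert (ln (opnorm B) <= ln (K ^ (N - n))) by (apply ln_le_ln; auto). lra.
Qed.

End GrowthBounds.

(* Stdlib's ln is 0 at nonpositive arguments *)
Lemma ln_0 : ln 0 = 0.
Proof. unfold ln. destruct (Rlt_dec 0 0) as [h|h]; [exfalso; exact (Rlt_irrefl 0 h)|reflexivity]. Qed.

Lemma Rpower_two_thirds_le x m : 0 <= x -> 1 <= m -> x * x <= m * m * m -> Rpower x (2 / 3) <= m.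
Proof.
  intros [hx| <-] hm h; unfold Rpower.
  - rewrite <- (exp_ln m) by lra. apply exp_le_exp.
    assert (hl : ln (x * x) <= ln (m * m * m)) by (apply ln_le_ln; nra).
    rewrite !ln_mult in hl by nra. lra.
  - rewrite ln_0, Rmult_0_r, exp_0. exact hm.
Qed.

(* ln s <= s - 1 applied to s = y^(1/4) *)
Lemma ln_le_4_sqrt_sqrt y : 1 <= y -> ln y <= 4 * sqrt (sqrt y).
Proof.
  intros hy. set (s := sqrt (sqrt y)).
  assert (hs0 : 0 < sqrt y) by (apply sqrt_lt_R0; lra).
  assert (hs : 0 < s) by (apply sqrt_lt_R0; lra).
  assert (e : y = s * s * (s * s)) by (unfold s; rewrite !sqrt_sqrt; lra).
  rewrite e at 1. rewrite !ln_mult by nra.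
  pose proof (exp_ineq1_le (ln s)) as h. rewrite exp_ln in h by exact hs. lra.
Qed.

Lemma ln_succ_sq_le eps n : 0 < eps -> (1 <= n)%nat -> (64 / eps) * (64 / eps) <= INR n ->
  2 * (ln (INR n + 1) * ln (INR n + 1)) <= eps * INR n.
Proof.
  intros he hn h.
  assert (h1 : 1 <= INR n) by (apply (le_INR 1); exact hn).
  set (t := sqrt (INR n)).
  assert (ht : t * t = INR n) by (apply sqrt_sqrt; lra).
  assert (ht0 : 0 <= t) by apply sqrt_pos.
  assert (hq : 64 / eps <= t) by (apply Rsqr_incr_0_var; unfold Rsqr; lra).
  assert (hq' : 64 <= eps * t).
  { replace 64 with (eps * (64 / eps)) by (field; lra). apply Rmult_le_compat_l; lra. }
  set (y := INR n + 1).
  pose proof (ln_le_4_sqrt_sqrt y ltac:(unfold y; lra)) as hl.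
  pose proof (ln_ge0 y ltac:(unfold y; lra)).
  assert (hy : 0 < sqrt y) by (apply sqrt_lt_R0; unfold y; lra).
  assert (hsy : sqrt y <= t + 1)
    by (apply Rsqr_incr_0_var; unfold Rsqr; [rewrite sqrt_sqrt; unfold y; nra|lra]).
  assert (hss : sqrt (sqrt y) * sqrt (sqrt y) = sqrt y) by (apply sqrt_sqrt; lra).
  assert (ln y * ln y <= 16 * sqrt y) by (pose proof (sqrt_pos (sqrt y)); nra).
  nra.
Qed.

Definition log_dist (z : Z) : R := ln (IZR (Z.abs z) + 1).

Lemma log_dist_ge0 z : 0 <= log_dist z.
Proof. apply ln_ge0. assert (0 <= IZR (Z.abs z)) by (apply IZR_le; lia). lra. Qed.

Lemma log_dist_add_le z q : log_dist (z + Z.of_nat q) <= log_dist z + ln (INR q + 1).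
Proof.
  unfold log_dist.
  assert (h0 : 0 <= IZR (Z.abs z)) by (apply IZR_le; lia).
  assert (h1 : 0 <= IZR (Z.abs (z + Z.of_nat q))) by (apply IZR_le; lia).
  assert (h2 : 0 <= INR q) by apply pos_INR.
  assert (IZR (Z.abs (z + Z.of_nat q)) <= IZR (Z.abs z) + INR q)
    by (rewrite INR_IZR_INZ, <- plus_IZR; apply IZR_le; lia).
  rewrite <- ln_mult by lra. apply ln_le_ln; nra.
Qed.

Lemma cube_bracket n : (1 <= n)%nat ->
  exists m, (1 <= m)%nat /\ ((m - 1) * (m - 1) * (m - 1) < n)%nat /\ (n <= m * (m * m))%nat.
Proof.
  induction n as [|n IH]; intros h; [lia|].
  destruct (Nat.eq_dec n 0) as [->|hn]; [exists 1%nat; simpl; lia|].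
  destruct IH as [m [h1 [h2 h3]]]; [lia|].
  destruct (Nat.le_gt_cases (S n) (m * (m * m))).
  - exists m. repeat split; lia.
  - exists (S m). replace (S m - 1)%nat with m by lia.
    assert (n = m * (m * m))%nat by lia. subst. repeat split; nia.
Qed.

Section LargeDeviation.
Variables (K eps lyap E : R) (w : Z -> R) (n0 M : nat).
Hypothesis Heps : 0 < eps < 1.
Hypothesis Hw : potential_bound K E w.
Hypothesis Havg : forall (n : nat) (z : Z),
  (1 <= n)%nat -> (n0 <= n)%nat -> Rpower (log_dist z) (2 / 3) <= INR n ->
  Rabs (lyap - / INR (n * n) * rsum (n * n) (fun s => Fn n (shift (z + Z.of_nat (s * n)) w) E)) < eps.
Hypothesis HM : (1 <= M)%nat /\ (n0 <= M)%nat.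
Hypothesis HM_eps : 24 * (2 * ln K + 2) / eps <= INR M.

Lemma lnK_ge0 : 0 <= ln K.
Proof. apply ln_ge0. pose proof (K_ge2 K E w Hw). lra. Qed.

Lemma lyap_bounds : - eps < lyap < ln K + eps.
Proof.
  assert (hr : Rpower (log_dist 0) (2 / 3) <= INR M).
  { apply Rpower_two_thirds_le; [apply log_dist_ge0|apply (le_INR 1); lia|].
    unfold log_dist. simpl. rewrite Rplus_0_l, ln_1.
    pose proof (le_INR 1 M (proj1 HM)). simpl in *. nra. }
  pose proof (Havg M 0%Z (proj1 HM) (proj2 HM) hr) as h.
  set (sumF := rsum (M * M) (fun s => Fn M (shift (0 + Z.of_nat (s * M)) w) E)) in h.
  assert (hMM : 0 < INR (M * M)) by (apply lt_0_INR; pose proof HM; nia).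
  assert (hS : INR (M * M) * 0 <= sumF <= INR (M * M) * ln K).
  { split; [apply rsum_ge|apply rsum_le]; intros s _;
      apply (Fn_bounds K E), (proj1 HM); apply potential_bound_shift, Hw. }
  assert (0 <= / INR (M * M) * sumF <= ln K).
  { split; apply Rmult_le_reg_l with (INR (M * M)); auto;
      rewrite ?Rmult_0_r, <- Rmult_assoc, Rinv_r, Rmult_1_l by lra; lra. }
  apply Rabs_def2 in h. lra.
Qed.

Lemma ln_opnorm_cube_lt m z : (1 <= m)%nat -> (n0 <= m)%nat -> Rpower (log_dist z) (2 / 3) <= INR m ->
  ln (opnorm (Mn E (shift z w) (m * (m * m)))) < INR m * INR m * INR m * (lyap + eps).
Proof.
  intros hm1 hm0 hr.
  pose proof (Havg m z hm1 hm0 hr) as h. apply Rabs_def2 in h. destruct h as [_ h].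
  assert (hm : 0 < INR m) by (apply lt_0_INR; lia).
  set (blocks := rsum (m * m) (fun s => ln (opnorm (Mn E (shift (z + Z.of_nat (s * m)) w) m)))).
  assert (hFS : rsum (m * m) (fun s => Fn m (shift (z + Z.of_nat (s * m)) w) E) = / INR m * blocks)
    by (unfold blocks, Fn; apply rsum_scal).
  rewrite hFS, mult_INR in h.
  eapply Rle_lt_trans; [apply ln_opnorm_Mn_mul_le|].
  erewrite rsum_ext by (intros; rewrite shift_shift; reflexivity). fold blocks.
  replace blocks with (INR m * INR m * INR m * (/ (INR m * INR m) * (/ INR m * blocks)))
    by (field; lra).
  apply Rmult_lt_compat_l; [|lra]. apply Rmult_lt_0_compat; [apply Rmult_lt_0_compat|]; lra.
Qed.

(* With n <= m^3 < 8 n the rounding error is d = m^3 - n <= 3 m^2 <= eps n / 8, which is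
   where the constant 24 (2 ln K + 2) / eps comes from. *)
Lemma Fn_le_lyap n z : (1 <= n)%nat -> (M * (M * M) <= n)%nat -> log_dist z ^ 2 <= INR n ->
  Fn n (shift z w) E <= lyap + 2 * eps.
Proof.
  intros hn hMn hz.
  destruct (cube_bracket n hn) as [m [hm1 [hm2 hm3]]].
  assert (hMm : (M <= m)%nat).
  { destruct (Nat.le_gt_cases M m) as [|hlt]; [assumption|].
    assert (m * (m * m) < M * (M * M))%nat by (apply Nat.mul_lt_mono; nia). lia. }
  assert (hr : Rpower (log_dist z) (2 / 3) <= INR m).
  { apply Rpower_two_thirds_le; [apply log_dist_ge0|apply (le_INR 1); lia|].
    apply le_INR in hm3. rewrite !mult_INR in hm3. simpl in hz. lra. }
  pose proof (ln_opnorm_cube_lt m z hm1 ltac:(lia) hr) as hcube.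
  pose proof (ln_opnorm_Mn_le_extend K E (shift z w) (potential_bound_shift _ _ _ z Hw) n _ hm3)
    as hext.
  assert (hd : (m * (m * m) - n <= 3 * (m * m))%nat).
  { destruct m; [lia|]. replace (S m - 1)%nat with m in hm2 by lia. nia. }
  assert (h8 : (m * (m * m) <= 8 * n)%nat).
  { destruct m; [lia|]. replace (S m - 1)%nat with m in hm2 by lia. nia. }
  apply le_INR in hd, h8. rewrite minus_INR in hd, hext by exact hm3.
  apply le_INR in hm3, hMm. rewrite !mult_INR in *. simpl (INR 3) in hd.
  simpl (INR 8) in h8.
  set (d := INR m * (INR m * INR m) - INR n) in *.
  assert (hnr : 0 < INR n) by (apply lt_0_INR; lia).
  destruct lyap_bounds as [hl1 hl2]. pose proof lnK_ge0.
  set (C1 := 2 * ln K + 2) in *.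
  assert (hC : 24 * C1 <= eps * INR m).
  { replace (24 * C1) with (eps * (24 * C1 / eps)) by (field; lra).
    apply Rmult_le_compat_l; lra. }
  assert (hd0 : 0 <= d) by (unfold d; lra).
  assert (d * (lyap + eps + ln K) <= d * C1) by (apply Rmult_le_compat_l; unfold C1; lra).
  assert (d * C1 <= 3 * (INR m * INR m) * C1) by (apply Rmult_le_compat_r; unfold C1; lra).
  assert (24 * C1 * (INR m * INR m) <= eps * INR m * (INR m * INR m))
    by (apply Rmult_le_compat_r; nra).
  assert (hfin : ln (opnorm (Mn E (shift z w) n)) <= INR n * (lyap + 2 * eps)).
  { replace (INR m * INR m * INR m) with (INR n + d) in hcube by (unfold d; ring). nra. }
  unfold Fn. apply Rmult_le_reg_l with (INR n); [exact hnr|].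
  rewrite <- Rmult_assoc, Rinv_r, Rmult_1_l by lra. exact hfin.
Qed.

Hypothesis HM_64 : (64 / eps) * (64 / eps) <= INR M.

Lemma ln_opnorm_short_le z len n : INR len <= 2 * eps * INR n ->
  ln (opnorm (Mn E (shift z w) len)) <= INR len * lyap + 2 * eps * INR n * (ln K + 1).
Proof.
  intros hlen.
  pose proof (ln_opnorm_Mn_le K E (shift z w) (potential_bound_shift _ _ _ z Hw) len).
  destruct lyap_bounds as [hl _]. pose proof (pos_INR len).
  assert (INR len * (ln K - lyap) <= INR len * (ln K + 1)) by (apply Rmult_le_compat_l; lra).
  assert (INR len * (ln K + 1) <= 2 * eps * INR n * (ln K + 1))
    by (apply Rmult_le_compat_r; pose proof lnK_ge0; lra).
  nra.
Qed.

(* If the block starts too far out for Fn_le_lyap, it is short: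
   len < log_dist (z + q)^2 <= 2 log_dist z^2 + 2 ln (n + 1)^2 <= 2 eps n. *)
Lemma short_of_far z q len n : (1 <= n)%nat -> (64 / eps) * (64 / eps) <= INR n ->
  2 * log_dist z ^ 2 <= eps * INR n -> (q + len <= n)%nat ->
  INR len < log_dist (z + Z.of_nat q) ^ 2 -> INR len <= 2 * eps * INR n.
Proof.
  intros hn h64 hz hql hfar.
  pose proof (ln_succ_sq_le eps n (proj1 Heps) hn h64) as hlog.
  pose proof (log_dist_add_le z q) as hs.
  assert (hq : ln (INR q + 1) <= ln (INR n + 1)).
  { apply le_INR in hql. rewrite plus_INR in hql. pose proof (pos_INR q). pose proof (pos_INR len).
    apply ln_le_ln; lra. }
  pose proof (log_dist_ge0 (z + Z.of_nat q)). pose proof (log_dist_ge0 z).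
  pose proof (ln_ge0 (INR q + 1) ltac:(pose proof (pos_INR q); lra)).
  set (y := log_dist (z + Z.of_nat q)) in *. set (x := log_dist z) in *.
  set (v := ln (INR n + 1)) in *.
  assert (y * y <= (x + v) * (x + v)) by (apply Rmult_le_compat; lra).
  pose proof (Rle_0_sqr (x - v)). unfold Rsqr in *. simpl in hz, hfar. nra.
Qed.

Lemma ln_opnorm_block_le n z q len :
  INR (M * (M * M)) <= eps * INR n -> 2 * log_dist z ^ 2 <= eps * INR n -> (q + len <= n)%nat ->
  ln (opnorm (Mn E (shift (z + Z.of_nat q) w) len)) <= INR len * lyap + 2 * eps * INR n * (ln K + 1).
Proof.
  intros hM3 hz hql.
  assert (hn0 : 0 <= INR n) by apply pos_INR.
  assert (hMn : (M * (M * M) <= n)%nat).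
  { apply INR_le. assert (eps * INR n <= INR n) by nra. lra. }
  assert (hn : (1 <= n)%nat) by (pose proof HM; nia).
  assert (h64 : (64 / eps) * (64 / eps) <= INR n).
  { apply le_INR in hMn. rewrite !mult_INR in hMn.
    pose proof (le_INR 1 M (proj1 HM)). simpl in *. nra. }
  destruct (Nat.le_gt_cases (M * (M * M)) len) as [hlong|hshort];
    [destruct (Rle_dec (log_dist (z + Z.of_nat q) ^ 2) (INR len)) as [hnear|hfar]|].
  - assert (hlen : (1 <= len)%nat) by (pose proof HM; nia).
    pose proof (Fn_le_lyap len (z + Z.of_nat q) hlen hlong hnear) as hF. unfold Fn in hF.
    assert (hl : 0 < INR len) by (apply lt_0_INR; lia).
    apply Rmult_le_compat_l with (r := INR len) in hF; [|lra].
    rewrite <- Rmult_assoc, Rinv_r, Rmult_1_l in hF by lra.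
    assert (INR len <= INR n) by (apply le_INR; lia).
    pose proof lnK_ge0. assert (0 <= eps * INR n * ln K) by (apply Rmult_le_pos; nra).
    nra.
  - apply ln_opnorm_short_le, (short_of_far z q len n); auto. lra.
  - apply ln_opnorm_short_le. apply lt_INR in hshort. nra.
Qed.

Lemma abs_Pn_block_le n z q len :
  INR (M * (M * M)) <= eps * INR n -> 2 * log_dist z ^ 2 <= eps * INR n -> (q + len <= n)%nat ->
  Rabs (Pn E (shift (Z.of_nat q) (shift z w)) len) <= exp (INR len * lyap + 2 * eps * INR n * (ln K + 1)).
Proof.
  intros hM3 hz hql. rewrite shift_shift.
  eapply Rle_trans; [apply Rabs_m11_le_opnorm|].
  rewrite <- (exp_ln (opnorm _)) by apply opnorm_Mn_pos.
  apply exp_le_exp, ln_opnorm_block_le; assumption.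
Qed.

Lemma green_le n z :
  / eps * Rmax (INR (M * (M * M))) (2 * log_dist z ^ 2) <= INR n ->
  ~ in_spec n (Hmat (shift z w)) E ->
  forall (j k : nat) (g : nat -> R), (j < n)%nat -> (k < n)%nat ->
  green_col n (Hmat (shift z w)) E k g ->
  Rabs (g j) <= exp ((INR n - Rabs (INR j - INR k)) * lyap + (4 * ln K + 5) * eps * INR n)
                / Rabs (det n (shiftE (Hmat (shift z w)) E)).
Proof.
  intros hcond hspec j k g hj hk hg.
  assert (hRm : Rmax (INR (M * (M * M))) (2 * log_dist z ^ 2) <= eps * INR n).
  { replace (Rmax _ _) with (eps * (/ eps * Rmax (INR (M * (M * M))) (2 * log_dist z ^ 2)))
      by (field; lra). apply Rmult_le_compat_l; lra. }
  pose proof (Rle_trans _ _ _ (Rmax_l _ _) hRm) as hM3.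
  pose proof (Rle_trans _ _ _ (Rmax_r _ _) hRm) as hz.
  assert (hP : Pn E (shift z w) n <> 0)
    by (intros h0; apply hspec, in_spec_of_Pn_eq0; [lia|exact h0]).
  rewrite det_shiftE_Hmat, Rabs_mult, <- RPow_abs, Rabs_m1, pow1, Rmult_1_l.
  assert (hD : 0 < Rabs (Pn E (shift z w) n)) by (apply Rabs_pos_lt, hP).
  apply Rmult_le_reg_r with (Rabs (Pn E (shift z w) n)); [exact hD|].
  unfold Rdiv. rewrite Rmult_assoc, Rinv_l, Rmult_1_r by lra.
  destruct lyap_bounds as [hl _]. pose proof lnK_ge0.
  assert (hn : 1 <= INR n) by (apply (le_INR 1); lia).
  set (c := 2 * eps * INR n * (ln K + 1)).
  assert (hprod : forall a b, a + b + 1 = INR n - Rabs (INR j - INR k) ->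
      exp (a * lyap + c) * exp (b * lyap + c)
      <= exp ((INR n - Rabs (INR j - INR k)) * lyap + (4 * ln K + 5) * eps * INR n)).
  { intros a b hab. rewrite <- exp_plus. apply exp_le_exp. rewrite <- hab. unfold c. nra. }
  destruct (green_formula E (shift z w) n k g hk hg j hj) as [f1 f2].
  pose proof (abs_Pn_block_le n z 0 j hM3 hz ltac:(lia)) as bj.
  pose proof (abs_Pn_block_le n z 0 k hM3 hz ltac:(lia)) as bk.
  pose proof (abs_Pn_block_le n z (S j) (n - S j) hM3 hz ltac:(lia)) as tj.
  pose proof (abs_Pn_block_le n z (S k) (n - S k) hM3 hz ltac:(lia)) as tk.
  rewrite shift0 in bj, bk. fold c in bj, bk, tj, tk. unfold Ptail in f1, f2.
  destruct (Nat.le_gt_cases j k) as [hjk|hjk].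
  - rewrite (f1 hjk). eapply Rle_trans; [apply Rmult_le_compat; eauto using Rabs_pos|].
    apply hprod. apply le_INR in hjk.
    rewrite minus_INR, S_INR, Rabs_left1 by (lia || lra). ring.
  - rewrite (f2 ltac:(lia)). eapply Rle_trans; [apply Rmult_le_compat; eauto using Rabs_pos|].
    apply hprod. apply lt_INR in hjk.
    rewrite minus_INR, S_INR, Rabs_right by (lia || lra). ring.
Qed.

End LargeDeviation.

Theorem corollary5p3 (I : (R -> R) -> R) (A : R -> Prop) (kappa : R) (L : R -> R)
  (HI : prob_functional I)
  (HA : forall x, A x <-> in_support I x)
  (HA2 : exists a b, A a /\ A b /\ a <> b)
  (Hkappa : (exists a, A a /\ Rabs a = kappa - 2) /\
            (forall a, A a -> Rabs a <= kappa - 2))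
  (HL : forall E, Un_cv (fun n => lyap_seq I E (S n)) (L E)) :
  exists C0 : R, 0 < C0 /\
  forall eps : R, 0 < eps < 1 ->
  forall w : Z -> R, (forall m, A (w m)) ->
  (exists n0 : nat, forall (n : nat) (z : Z) (E : R),
     (1 <= n)%nat -> (n0 <= n)%nat ->
     Rpower (ln (IZR (Z.abs z) + 1)) (2 / 3) <= INR n ->
     -kappa <= E <= kappa ->
     Rabs (L E - / INR (n * n) *
       rsum (n * n) (fun s => Fn n (shift (z + Z.of_nat (s * n)) w) E)) < eps) ->
  exists n1 : nat,
    (forall (E : R) (n : nat) (z : Z),
       -kappa <= E <= kappa -> (1 <= n)%nat -> (n1 <= n)%nat ->
       (ln (IZR (Z.abs z) + 1)) ^ 2 <= INR n ->
       Fn n (shift z w) E <= L E + 2 * eps) /\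
    (forall (n : nat) (z : Z),
       / eps * Rmax (INR n1) (2 * (ln (IZR (Z.abs z) + 1)) ^ 2) <= INR n ->
       forall E : R, -kappa <= E <= kappa -> ~ in_spec n (Hmat (shift z w)) E ->
       forall (j k : nat) (g : nat -> R), (j < n)%nat -> (k < n)%nat ->
       green_col n (Hmat (shift z w)) E k g ->
       Rabs (g j) <=
         exp ((INR n - Rabs (INR j - INR k)) * L E + C0 * eps * INR n)
         / Rabs (det n (shiftE (Hmat (shift z w)) E))).
Proof.
  destruct Hkappa as [[a0 [_ ha0]] hA].
  set (K := 2 * kappa).
  assert (hK : 4 <= K) by (pose proof (Rabs_pos a0); unfold K; lra).
  exists (4 * ln K + 5). split; [pose proof (ln_ge0 K ltac:(lra)); lra|].
  intros eps heps w hw [n0 hyp].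
  assert (hpot : forall E, -kappa <= E <= kappa -> potential_bound K E w).
  { intros E hE m. pose proof (hA _ (hw m)). pose proof (Rabs_triang E (- w m)).
    rewrite Rabs_Ropp in *. assert (Rabs E <= kappa) by (apply Rabs_le; lra).
    unfold K, Rminus. lra. }
  destruct (INR_unbounded (Rmax (24 * (2 * ln K + 2) / eps) ((64 / eps) * (64 / eps))))
    as [M0 hM0].
  set (M := (M0 + n0 + 1)%nat).
  assert (hMr : Rmax (24 * (2 * ln K + 2) / eps) ((64 / eps) * (64 / eps)) <= INR M)
    by (unfold M; rewrite !plus_INR; pose proof (pos_INR n0); simpl (INR 1); lra).
  assert (hM : (1 <= M)%nat /\ (n0 <= M)%nat) by (unfold M; lia).
  exists (M * (M * M))%nat. split.
  - intros E n z hE. apply (Fn_le_lyap K eps (L E) E w n0 M); auto.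
    exact (Rle_trans _ _ _ (Rmax_l _ _) hMr).
  - intros n z hcond E hE. apply (green_le K eps (L E) E w n0 M); auto.
    + exact (Rle_trans _ _ _ (Rmax_l _ _) hMr).
    + exact (Rle_trans _ _ _ (Rmax_r _ _) hMr).
Qed.
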